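(* Let $\Omega_0$ be a distribution of a finite alphabet $\Sigma$ and $\mathsf{Obs}$ an observation function over $\Sigma$ with $\Omega_0\not\models\mathsf{Obs}$. Consider any sequence of distributions defined by: while $\mathit{CED}(\Omega_k,\mathsf{Obs})\neq\emptyset$, choose a non-empty $S_k\subseteq\mathit{CED}(\Omega_k,\mathsf{Obs})$ and for each $ce\in S_k$ a discrepancy $\delta_{ce}\in\mathcal D(ce)$, and set $\Omega_{k+1}=\Omega_k\cup\{\delta_{ce}\mid ce\in S_k\}$. Then every such sequence is finite, and its last element $\Omega'$ satisfies $\Omega'\models\mathsf{Obs}$ and $\Omega_0\prec\Omega'$. If moreover $S_k=\mathit{CED}(\Omega_k,\mathsf{Obs})$ at every step, the number of steps is at most $|\mathcal P(\Sigma)|$.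
   Context: $\sigma|_{\Sigma'}$ is the projection of a word onto $\Sigma'$; $\mathcal P(\Sigma)$ is the power set. A distribution of $\Sigma$ is a finite set of subsets of $\Sigma$ with union $\Sigma$. An observation function is a partial map $\mathsf{Obs}:\Sigma^\star\rightharpoonup\{+,-\}$ with finite domain. $\Omega\models\mathsf{Obs}$ means there exist $\mathcal L_{\Sigma_i}\subseteq\Sigma_i^\star$ ($\Sigma_i\in\Omega$) such that $\mathcal L=\{w\mid\forall\Sigma_i\in\Omega.\ w|_{\Sigma_i}\in\mathcal L_{\Sigma_i}\}$ satisfies $\sigma\in\mathcal L\iff\mathsf{Obs}(\sigma)=+$ on $\mathsf{Dom}(\mathsf{Obs})$. A counter-example to $\Omega\models\mathsf{Obs}$ is a pair $(\sigma_N,P)$ with $\mathsf{Obs}(\sigma_N)=-$ and $P:\Omega\to\mathsf{Dom}(\mathsf{Obs})$ with $\mathsf{Obs}(P(\Sigma_i))=+$ and $\sigma_N|_{\Sigma_i}=P(\Sigma_i)|_{\Sigma_i}$ for all $\Sigma_i\in\Omega$; $\mathit{CED}(\Omega,\mathsf{Obs})$ is the set of these. Discrepancies: for $\Sigma_i\in\Omega$, $\mathcal D_m^{\Sigma_i}(\sigma_N,P)$ is the set of symbols occurring a different number of times in $\sigma_N$ and $P(\Sigma_i)$; with $\theta=\Sigma\setminus\mathcal D_m^{\Sigma_i}$, $u=\sigma_N|_\theta$, $w=P(\Sigma_i)|_\theta$, $\pi$ the unique position bijection with $u[j]=w[\pi(j)]$ preserving the relative order of equal symbols, $\mathcal D_o^{\Sigma_i}(\sigma_N,P)=\{\{u[j],u[k]\}\mid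 j<k,\ \pi(j)>\pi(k)\}$. $\delta\subseteq\Sigma$ is a discrepancy iff for each $\Sigma_i\in\Omega$, $\delta\cap\mathcal D_m^{\Sigma_i}\ne\emptyset$ or $\delta$ contains an element of $\mathcal D_o^{\Sigma_i}$; $\mathcal D(ce)$ denotes the set of discrepancies of $ce$. $\Omega\preccurlyeq\Omega'$ iff each element of $\Omega$ is contained in some element of $\Omega'$; $\Omega\prec\Omega'$ iff $\Omega\preccurlyeq\Omega'$ and $\Omega'\not\preccurlyeq\Omega$. *)

From mathcomp Require Import all_boot.
Set Implicit Arguments. Unset Strict Implicit. Unset Printing Implicit Defensive.

Section Defs.
Variable Sigma : finType.

Definition proj (A : {set Sigma}) (w : seq Sigma) : seq Sigma :=
  [seq a <- w | a \in A].

Definition is_distribution (Om : {set {set Sigma}}) : Prop :=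
  \bigcup_(A in Om) A = [set: Sigma].

(* An observation function Sigma^* -> {+,-} (partial): Some true = +,
   Some false = -, None = undefined.  Its domain must be finite. *)
Definition obs_finite (Obs : seq Sigma -> option bool) : Prop :=
  exists dom : seq (seq Sigma), forall w, Obs w <> None -> w \in dom.

Definition models (Om : {set {set Sigma}}) (Obs : seq Sigma -> option bool) : Prop :=
  exists L : {set Sigma} -> seq Sigma -> Prop,
    (forall A w, L A w -> {subset w <= A}) /\
    (forall sigma, Obs sigma <> None ->
       ((forall A, A \in Om -> L A (proj A sigma)) <-> Obs sigma = Some true)).

(* A candidate counter-example (sigma_N, P); P is a finite function on subsets
   of Sigma, only its values on Om are meaningful (normalised to [::] outside). *)
Definition cex := (seq Sigma * {ffun {set Sigma} -> seq Sigma})%type.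

Definition CED (Om : {set {set Sigma}}) (Obs : seq Sigma -> option bool)
  (ce : cex) : Prop :=
  let: (sN, P) := ce in
  Obs sN = Some false /\
  (forall A, A \in Om -> Obs (P A) = Some true /\ proj A sN = proj A (P A)) /\
  (forall A, A \notin Om -> P A = [::]).

Definition Dm (sN w : seq Sigma) : {set Sigma} :=
  [set a | count_mem a sN != count_mem a w].

(* Tag every letter with the number of its previous occurrences; the position
   bijection pi preserving the relative order of equal letters maps the tagged
   letter at position j of u to the same tagged letter in w. *)
Definition tagseq (s : seq Sigma) : seq (Sigma * nat) :=
  [seq (x.1, count_mem x.1 (take x.2 s)) | x <- zip s (iota 0 (size s))].

Definition Do (sN w : seq Sigma) (d : {set Sigma}) : Prop :=
  let theta := ~: Dm sN w in
  let tu := tagseq (proj theta sN) in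
  let tw := tagseq (proj theta w) in
  exists x y, x \in tu /\ y \in tu /\
    index x tu < index y tu /\ index y tw < index x tw /\
    d = [set x.1; y.1].

Definition discrepancy (Om : {set {set Sigma}}) (ce : cex) (delta : {set Sigma}) : Prop :=
  let: (sN, P) := ce in
  forall A, A \in Om ->
    (delta :&: Dm sN (P A) != set0) \/ (exists d, Do sN (P A) d /\ d \subset delta).

Definition refines (Om Om' : {set {set Sigma}}) : Prop :=
  forall A, A \in Om -> exists2 B, B \in Om' & A \subset B.
Definition strict_refines (Om Om' : {set {set Sigma}}) : Prop :=
  refines Om Om' /\ ~ refines Om' Om.

Definition stepS (Obs : seq Sigma -> option bool) (Om : {set {set Sigma}})
  (S : cex -> Prop) (Om' : {set {set Sigma}}) : Prop :=
  exists delta : cex -> {set Sigma},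
    (forall ce, S ce -> discrepancy Om ce (delta ce)) /\
    (forall A, A \in Om' <-> (A \in Om \/ exists ce, S ce /\ delta ce = A)).

Definition step (Obs : seq Sigma -> option bool) (Om Om' : {set {set Sigma}}) : Prop :=
  exists S : cex -> Prop,
    (exists ce, S ce) /\ (forall ce, S ce -> CED Om Obs ce) /\ stepS Obs Om S Om'.

Definition full_step (Obs : seq Sigma -> option bool) (Om Om' : {set {set Sigma}}) : Prop :=
  (exists ce, CED Om Obs ce) /\ stepS Obs Om (CED Om Obs) Om'.

End Defs.

From mathcomp Require Import all_boot.

(* A discrepancy [delta] of a counter-example [(sigma_N, P)] is contained in
   no block [A] of the current distribution.  Indeed [sigma_N] and [P A] have
   the same projection on [A]; a multiplicity discrepancy inside [A] would be
   visible in that projection, and so would an order discrepancy [{a, b}]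
   inside [A], since restricting both tagged words to the letters of [A]
   outside the multiplicity discrepancies preserves the inversion.  Hence
   every step adds a fresh block, the distributions grow strictly inside the
   finite set [P(P(Sigma))], and the fresh block added by the first step
   witnesses that the refinement is strict.  When no counter-example is left,
   the languages [L_A] of projections of positive observations realise [Obs]. *)

Set Implicit Arguments. Unset Strict Implicit. Unset Printing Implicit Defensive.

Lemma index_filter_lt (T : eqType) (q : pred T) x y (s : seq T) :
  q x -> q y -> (index x (filter q s) < index y (filter q s)) = (index x s < index y s).
Proof.
move=> qx qy; elim: s => [|z s IHs] //=.
case qz: (q z) => /=; first by case: (z == x); case: (z == y).
have zx : (z == x) = false by apply: contraFF qz => /eqP ->.
have zy : (z == y) = false by apply: contraFF qz => /eqP ->.
by rewrite zx zy ltnS.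
Qed.

Section Projection.
Variable Sigma : finType.
Implicit Types (A B : {set Sigma}) (s w : seq Sigma).

Lemma tagseq_rcons s a : tagseq (rcons s a) = rcons (tagseq s) (a, count_mem a s).
Proof.
rewrite /tagseq size_rcons -addn1 iotaD add0n /= cats1 zip_rcons ?size_iota //.
rewrite map_rcons /=; congr rcons; last by rewrite -cats1 take_size_cat.
apply/eq_in_map => -[b i] /= zip_bi.
have : i \in unzip2 (zip s (iota 0 (size s))) by exact: (map_f snd zip_bi).
rewrite unzip2_zip ?size_iota // mem_iota add0n => /andP[_ lt_i_s].
by rewrite -cats1 takel_cat // ltnW.
Qed.

(* Tags count earlier occurrences of the same letter, so they survive filtering. *)
Lemma tagseq_filter (p : pred Sigma) s :
  tagseq (filter p s) = filter (fun x => p x.1) (tagseq s).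
Proof.
elim/last_ind: s => [|s a IHs] //.
rewrite filter_rcons !tagseq_rcons filter_rcons /=.
case pa: (p a) => //; rewrite tagseq_rcons IHs; congr (rcons _ (_, _)).
rewrite count_filter; apply: eq_count => z /=.
by case: eqP => // ->; rewrite pa.
Qed.

Lemma mem_tagseq x s : x \in tagseq s -> x.1 \in s.
Proof.
elim/last_ind: s => [|s a IHs] //.
rewrite tagseq_rcons !(mem_rcons, in_cons) => /orP[/eqP -> | /IHs ->].
  by rewrite eqxx.
by rewrite orbT.
Qed.

Lemma projS A B s : A \subset B -> proj A (proj B s) = proj A s.
Proof.
move=> sAB; rewrite /proj -filter_predI; apply: eq_filter => z /=.
by case zA: (z \in A); rewrite // (subsetP sAB).
Qed.

Lemma count_proj A s a : a \in A -> count_mem a (proj A s) = count_mem a s.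
Proof.
move=> aA; rewrite /proj count_filter; apply: eq_count => z /=.
by case: eqP => // ->; rewrite aA.
Qed.

Lemma proj_eqS A B s w : B \subset A -> proj A s = proj A w -> proj B s = proj B w.
Proof. by move=> sBA eq_sw; rewrite -(projS s sBA) eq_sw projS. Qed.

Lemma Dm_proj_eq A s w : proj A s = proj A w -> A :&: Dm s w = set0.
Proof.
move=> eq_sw; apply/setP => a; rewrite !inE.
case aA: (a \in A) => //=.
by rewrite -(count_proj s aA) -(count_proj w aA) eq_sw eqxx.
Qed.

Lemma Do_proj_eq A s w d : proj A s = proj A w -> Do s w d -> ~ d \subset A.
Proof.
rewrite /Do; set theta := ~: Dm s w; set ts := tagseq _; set tw := tagseq _.
move=> eq_sw [x [y [xs [ys [lt_xy [lt_yx eq_d]]]]]] sdA.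
set C := A :&: theta; pose inC (z : Sigma * nat) := z.1 \in C.
have inC_tag z : z \in ts -> z.1 \in d -> inC z.
  move=> /mem_tagseq; rewrite /proj mem_filter => /andP[z_theta _] zd.
  by rewrite /inC inE (subsetP sdA).
have [xC yC] : inC x /\ inC y.
  by split; apply: inC_tag; rewrite // eq_d !inE eqxx ?orbT.
have eq_filter_tags : filter inC ts = filter inC tw.
  have := congr1 (@tagseq Sigma) (proj_eqS (subsetIl A theta) eq_sw).
  rewrite -(projS s (subsetIr A theta)) -(projS w (subsetIr A theta)).
  by rewrite !(tagseq_filter (fun a => a \in C)).
move: lt_xy; rewrite -(index_filter_lt ts xC yC) eq_filter_tags index_filter_lt //.
by rewrite ltnNge (ltnW lt_yx).
Qed.

Lemma discrepancy_not_subset A s w delta :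
  proj A s = proj A w ->
  (delta :&: Dm s w != set0) \/ (exists d, Do s w d /\ d \subset delta) ->
  ~ delta \subset A.
Proof.
move=> eq_sw [/set0Pn[a /setIP[a_delta a_Dm]] | [d [Do_d sd_delta]]] sdA.
  have /setP/(_ a) := Dm_proj_eq eq_sw.
  by rewrite in_setI (subsetP sdA _ a_delta) a_Dm in_set0.
exact: (Do_proj_eq eq_sw Do_d (subset_trans sd_delta sdA)).
Qed.

End Projection.

Section Chains.
Variables (T : finType) (f : nat -> {set T}).

Lemma subset_chain n :
  (forall k, k < n -> f k \subset f k.+1) -> forall k, k <= n -> f k \subset f n.
Proof.
elim: n => [|n IHn] sub_f k; first by rewrite leqn0 => /eqP ->.
rewrite leq_eqVlt => /predU1P[-> // | lt_kn].
apply: subset_trans (sub_f n _) => //; apply: IHn => // j lt_jn.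
by apply: sub_f; rewrite ltnS ltnW.
Qed.

Lemma proper_chain_card n : (forall k, k < n -> f k \proper f k.+1) -> n <= #|f n|.
Proof.
elim: n => [|n IHn] // proper_f.
apply: leq_ltn_trans (IHn _) (proper_card (proper_f _ _)) => // k lt_kn.
by apply: proper_f; rewrite ltnS ltnW.
Qed.

End Chains.

Section Refinement.
Variables (Sigma : finType) (Obs : seq Sigma -> option bool).
Implicit Types (Om : {set {set Sigma}}) (S : cex Sigma -> Prop) (ce : cex Sigma).

Lemma CED_discrepancy_not_subset Om ce delta A :
  CED Om Obs ce -> discrepancy Om ce delta -> A \in Om -> ~ delta \subset A.
Proof.
case: ce => sN P [_ [CED_P _]] disc_delta AOm.
exact: discrepancy_not_subset (CED_P A AOm).2 (disc_delta A AOm).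
Qed.

Lemma stepS_subset Om S Om' : stepS Obs Om S Om' -> Om \subset Om'.
Proof. by move=> [delta [_ Om'E]]; apply/subsetP => A AOm; apply/Om'E; left. Qed.

Lemma stepS_fresh Om S Om' ce :
  S ce -> CED Om Obs ce -> stepS Obs Om S Om' ->
  exists2 d, d \in Om' & forall A, A \in Om -> ~ d \subset A.
Proof.
move=> Sce CEDce [delta [disc_delta Om'E]]; exists (delta ce).
  by apply/Om'E; right; exists ce.
by move=> A; apply: CED_discrepancy_not_subset CEDce (disc_delta ce Sce).
Qed.

Lemma fresh_proper Om Om' d :
  Om \subset Om' -> d \in Om' -> (forall A, A \in Om -> ~ d \subset A) -> Om \proper Om'.
Proof.
move=> sub dOm' fresh_d; apply/properP; split => //; exists d => //.
by apply/negP => dOm; apply: fresh_d dOm (subxx d).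
Qed.

Lemma step_subset Om Om' : step Obs Om Om' -> Om \subset Om'.
Proof. by move=> [S [_ [_ /stepS_subset]]]. Qed.

Lemma step_fresh Om Om' : step Obs Om Om' ->
  exists2 d, d \in Om' & forall A, A \in Om -> ~ d \subset A.
Proof. by move=> [S [[ce Sce] [CED_S]]]; apply: stepS_fresh Sce (CED_S _ Sce). Qed.

Lemma step_proper Om Om' : step Obs Om Om' -> Om \proper Om'.
Proof.
move=> st; have [d dOm' fresh_d] := step_fresh st.
exact: fresh_proper (step_subset st) dOm' fresh_d.
Qed.

Lemma full_step_proper Om Om' : full_step Obs Om Om' -> Om \proper Om'.
Proof.
move=> [[ce CEDce] st]; have [d dOm' fresh_d] := stepS_fresh CEDce CEDce st.
exact: fresh_proper (stepS_subset st) dOm' fresh_d.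
Qed.

Lemma strict_refines_fresh Om Om' d :
  Om \subset Om' -> d \in Om' -> (forall A, A \in Om -> ~ d \subset A) ->
  strict_refines Om Om'.
Proof.
move=> sub dOm' fresh_d; split; first by move=> A AOm; exists A; rewrite ?(subsetP sub).
by move=> /(_ d dOm') [B BOm]; apply: fresh_d.
Qed.

Lemma models_of_no_CED Om :
  obs_finite Obs -> ~ (exists ce, CED Om Obs ce) -> models Om Obs.
Proof.
move=> [dom dom_Obs] no_CED.
exists (fun A w => exists s, Obs s = Some true /\ w = proj A s); split.
  by move=> A w [s [_ ->]] z; rewrite /proj mem_filter => /andP[].
move=> sigma Obs_sigma; split; last by move=> pos A _; exists sigma.
move=> proj_pos; case Es: (Obs sigma) Obs_sigma => [[]|] // _; exfalso; apply: no_CED.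
pose witness A w := (Obs w == Some true) && (proj A w == proj A sigma).
pose P := [ffun A => if A \in Om then nth [::] dom (find (witness A) dom) else [::]].
exists (sigma, P); split => //; split => A; rewrite ffunE; last by move/negbTE ->.
move=> AOm; rewrite AOm.
have has_witness : has (witness A) dom.
  have [s [pos_s proj_s]] := proj_pos A AOm.
  apply/hasP; exists s; first by apply: dom_Obs; rewrite pos_s.
  by rewrite /witness pos_s -proj_s !eqxx.
by have /andP[/eqP -> /eqP ->] := nth_find [::] has_witness.
Qed.

End Refinement.

Theorem mainTheorem12 (Sigma : finType) (Om0 : {set {set Sigma}})
  (Obs : seq Sigma -> option bool) :
  is_distribution Om0 -> obs_finite Obs -> ~ models Om0 Obs ->
  [/\ ~ (exists f : nat -> {set {set Sigma}},
           f 0 = Om0 /\ forall k, step Obs (f k) (f k.+1)),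
      (forall (n : nat) (f : nat -> {set {set Sigma}}),
         f 0 = Om0 -> (forall k, k < n -> step Obs (f k) (f k.+1)) ->
         ~ (exists ce, CED (f n) Obs ce) ->
         models (f n) Obs /\ strict_refines Om0 (f n))
    & (forall (n : nat) (f : nat -> {set {set Sigma}}),
         f 0 = Om0 -> (forall k, k < n -> full_step Obs (f k) (f k.+1)) ->
         n <= #|powerset [set: Sigma]|)].
Proof.
move=> _ fin_Obs not_models; split.
- move=> [f [_ step_f]].
  have := @proper_chain_card _ f #|{set Sigma}|.+1 (fun k _ => step_proper (step_f k)).
  by rewrite ltnNge max_card.
- move=> [|n] f f0 step_f no_CED.
    by case: not_models; rewrite -f0; exact: models_of_no_CED.
  have sub_f := subset_chain (fun k lt_kn => step_subset (step_f k lt_kn)).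
  have [d d1 fresh_d] := step_fresh (step_f 0 isT); rewrite f0 in fresh_d.
  split; first exact: models_of_no_CED.
  apply: strict_refines_fresh (subsetP (sub_f 1 isT) _ d1) fresh_d.
  by rewrite -f0; apply: sub_f.
- move=> n f _ step_f.
  apply: leq_trans (proper_chain_card (fun k lt_kn => full_step_proper (step_f k lt_kn))) _.
  by rewrite powersetT cardsT max_card.
Qed.
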